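(* Let $n\geq 1$ be an integer and $\gamma$ a real number with $0<\gamma\leq 1/64$ and $n+2\leq \gamma^{-1/2}/16$. Let $\lambda=\sqrt{8}+\gamma$ and $\Delta=\sqrt{\lambda^2-8}$. Then $\Delta\leq 4\sqrt{\gamma}$, and for every integer $i$ with $0\leq i\leq n+2$: (1) $0<\frac{2\Delta}{\lambda+\Delta}<\frac{2\Delta}{\lambda-\Delta}<\frac{1}{2(n+2)}$; (2) $1+\frac{i\Delta}{\lambda-\Delta}\leq\left(\frac{\lambda+\Delta}{\lambda-\Delta}\right)^i\leq 1+\frac{4i\Delta}{\lambda-\Delta}$; (3) $1-\frac{4i\Delta}{\lambda+\Delta}\leq\left(\frac{\lambda-\Delta}{\lambda+\Delta}\right)^i\leq 1-\frac{i\Delta}{\lambda+\Delta}$; (4) $1+\frac{1}{2(n+1)}\leq \dfrac{1-\left(\frac{\lambda+\Delta}{\lambda-\Delta}\right)^{n+2}}{1-\left(\frac{\lambda+\Delta}{\lambda-\Delta}\right)^{n+1}}\leq 1+\frac{4}{n+1}$. *)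

From Stdlib Require Import Reals.

(* With x = 2Δ/(λ-Δ) and y = 2Δ/(λ+Δ) the two ratios are 1 + x and 1 - y.
   Since Δ² = 2√8 γ + γ² <= 16 γ, the hypothesis on n gives (n+2) Δ <= 1/4,
   and as λ - Δ >= 2 also (n+2) x <= 1/4.  In that range Bernoulli's
   inequality and its converse up to a factor 2 sandwich (1 + x)^i and
   (1 - y)^i between linear functions of i, which is (2) and (3).  For (4),
   with Q = (1 + x)^(n+1) the quotient equals 1 + x Q / (Q - 1), and
   Q - 1 lies between (n+1) x and 2 (n+1) x. *)

From Stdlib Require Import Reals Lra Psatz.
Open Scope R_scope.

Lemma Rle_div_of_mult_le a b c : 0 < c -> a * c <= b -> a <= b / c.
Proof.
  intros hc hab; apply Rmult_le_reg_r with c; [exact hc|].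
  unfold Rdiv; rewrite Rmult_assoc, Rinv_l; lra.
Qed.

Lemma Rdiv_le_of_le_mult a b c : 0 < c -> b <= a * c -> b / c <= a.
Proof.
  intros hc hab; apply Rmult_le_reg_r with c; [exact hc|].
  unfold Rdiv; rewrite Rmult_assoc, Rinv_l; lra.
Qed.

Lemma pow_1p_le x k : 0 <= x -> INR k * x <= 1 / 2 -> (1 + x) ^ k <= 1 + 2 * INR k * x.
Proof.
  intros hx; induction k as [|k IH]; intros hk; [simpl; lra|].
  rewrite S_INR in hk |- *.
  assert (hk0 : 0 <= INR k) by apply pos_INR.
  assert (IHk : (1 + x) ^ k <= 1 + 2 * INR k * x) by (apply IH; nra).
  simpl; nra.
Qed.

Lemma pow_1m_ge y k : 0 <= y <= 1 -> 1 - INR k * y <= (1 - y) ^ k.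
Proof.
  intros hy; induction k as [|k IH]; [simpl; lra|].
  rewrite S_INR; simpl.
  assert (0 <= (1 - y) * ((1 - y) ^ k - (1 - INR k * y))) by (apply Rmult_le_pos; lra).
  assert (0 <= INR k) by apply pos_INR.
  nra.
Qed.

Lemma pow_1m_le y k : 0 <= y -> INR k * y <= 1 -> (1 - y) ^ k <= 1 - INR k * y / 2.
Proof.
  intros hy; induction k as [|k IH]; intros hk; [simpl; lra|].
  rewrite S_INR in hk |- *.
  assert (hk0 : 0 <= INR k) by apply pos_INR.
  assert (IHk : (1 - y) ^ k <= 1 - INR k * y / 2) by (apply IH; nra).
  assert (0 <= (1 - y) * (1 - INR k * y / 2 - (1 - y) ^ k)) by (apply Rmult_le_pos; nra).
  simpl; nra.
Qed.

Lemma geometric_quotient_bounds x m :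
  0 < x -> (1 <= m)%nat -> INR m * x <= 1 / 2 ->
  1 + 1 / (2 * INR m) <= (1 - (1 + x) ^ S m) / (1 - (1 + x) ^ m) <= 1 + 4 / INR m.
Proof.
  intros hx hm hmx.
  assert (hm1 : 1 <= INR m) by (apply (le_INR 1); exact hm).
  set (Q := (1 + x) ^ m).
  assert (hQlo : 1 + INR m * x <= Q) by apply poly, hx.
  assert (hQhi : Q <= 1 + 2 * INR m * x) by (apply pow_1p_le; lra).
  assert (hQ1 : 0 < Q - 1) by nra.
  replace ((1 - (1 + x) ^ S m) / (1 - Q)) with (1 + x * Q / (Q - 1))
    by (simpl; fold Q; field; lra).
  split; apply Rplus_le_compat_l.
  - apply Rle_div_of_mult_le; [exact hQ1|].
    replace (1 / (2 * INR m) * (Q - 1)) with ((Q - 1) / (2 * INR m)) by (field; lra).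
    apply Rdiv_le_of_le_mult; nra.
  - apply Rdiv_le_of_le_mult; [exact hQ1|].
    replace (4 / INR m * (Q - 1)) with (4 * (Q - 1) / INR m) by (field; lra).
    apply Rle_div_of_mult_le; nra.
Qed.

Section Ratios.

Variables lam Delta : R.
Hypothesis Delta_pos : 0 < Delta.
Hypothesis gap : 2 <= lam - Delta.

Lemma ratio_gt1_eq : (lam + Delta) / (lam - Delta) = 1 + 2 * Delta / (lam - Delta).
Proof. field; lra. Qed.

Lemma ratio_lt1_eq : (lam - Delta) / (lam + Delta) = 1 - 2 * Delta / (lam + Delta).
Proof. field; lra. Qed.

Lemma two_Delta_div_lt_le : 0 < 2 * Delta / (lam + Delta) < 2 * Delta / (lam - Delta) /\
  2 * Delta / (lam - Delta) <= Delta.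
Proof.
  split; [split|].
  - apply Rdiv_lt_0_compat; lra.
  - unfold Rdiv; apply Rmult_lt_compat_l; [lra|].
    apply Rinv_lt_contravar; nra.
  - apply Rdiv_le_of_le_mult; nra.
Qed.

Lemma two_Delta_div_bounds N : 0 < N -> N * Delta <= 1 / 4 ->
  0 < 2 * Delta / (lam + Delta) /\
  2 * Delta / (lam + Delta) < 2 * Delta / (lam - Delta) /\
  2 * Delta / (lam - Delta) < 1 / (2 * N).
Proof.
  intros hN hND.
  destruct two_Delta_div_lt_le as [[hy hyx] hx].
  split; [exact hy|split; [exact hyx|]].
  apply Rle_lt_trans with Delta; [exact hx|].
  apply Rmult_lt_reg_r with (2 * N); [lra|].
  replace (1 / (2 * N) * (2 * N)) with 1 by (field; lra).
  lra.
Qed.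

Lemma pow_ratio_gt1_bounds k : INR k * Delta <= 1 / 4 ->
  1 + INR k * Delta / (lam - Delta) <= ((lam + Delta) / (lam - Delta)) ^ k <=
  1 + 4 * INR k * Delta / (lam - Delta).
Proof.
  intros hk.
  destruct two_Delta_div_lt_le as [[hy0 hyx] hxD].
  assert (hk0 : 0 <= INR k) by apply pos_INR.
  rewrite ratio_gt1_eq.
  set (x := 2 * Delta / (lam - Delta)) in *.
  assert (hx0 : 0 < x) by lra.
  replace (INR k * Delta / (lam - Delta)) with (INR k * x / 2) by (unfold x; field; lra).
  replace (4 * INR k * Delta / (lam - Delta)) with (2 * INR k * x) by (unfold x; field; lra).
  assert (hbern := poly k x hx0).
  split; [nra|].
  apply pow_1p_le; nra.
Qed.

Lemma pow_ratio_lt1_bounds k : INR k * Delta <= 1 / 4 ->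
  1 - 4 * INR k * Delta / (lam + Delta) <= ((lam - Delta) / (lam + Delta)) ^ k <=
  1 - INR k * Delta / (lam + Delta).
Proof.
  intros hk.
  destruct two_Delta_div_lt_le as [[hy0 hyx] hxD].
  assert (hk0 : 0 <= INR k) by apply pos_INR.
  rewrite ratio_lt1_eq.
  set (y := 2 * Delta / (lam + Delta)) in *.
  assert (hy1 : y <= 1) by (apply Rdiv_le_of_le_mult; lra).
  replace (INR k * Delta / (lam + Delta)) with (INR k * y / 2) by (unfold y; field; lra).
  replace (4 * INR k * Delta / (lam + Delta)) with (2 * INR k * y) by (unfold y; field; lra).
  split.
  - assert (hbern : 1 - INR k * y <= (1 - y) ^ k) by (apply pow_1m_ge; lra).
    assert (0 <= INR k * y) by (apply Rmult_le_pos; lra).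
    lra.
  - apply pow_1m_le; nra.
Qed.

Lemma ratio_pow_quotient_bounds m : (1 <= m)%nat -> INR m * Delta <= 1 / 4 ->
  1 + 1 / (2 * INR m) <=
    (1 - ((lam + Delta) / (lam - Delta)) ^ S m) / (1 - ((lam + Delta) / (lam - Delta)) ^ m) <=
  1 + 4 / INR m.
Proof.
  intros hm hmD.
  destruct two_Delta_div_lt_le as [[hy0 hyx] hxD].
  assert (0 <= INR m) by apply pos_INR.
  rewrite ratio_gt1_eq.
  apply geometric_quotient_bounds; [lra | exact hm | nra].
Qed.

End Ratios.

Lemma sqrt_excess_bounds g : 0 < g <= 1 ->
  0 < sqrt ((sqrt 8 + g) ^ 2 - 8) <= 4 * sqrt g.
Proof.
  intros hg.
  assert (hs : sqrt 8 * sqrt 8 = 8) by (apply sqrt_sqrt; lra).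
  assert (hs0 : 0 <= sqrt 8) by apply sqrt_pos.
  assert (hs3 : sqrt 8 < 3) by nra.
  split.
  - apply sqrt_lt_R0; nra.
  - replace (4 * sqrt g) with (sqrt (16 * g))
      by (rewrite sqrt_mult by lra; replace 16 with (4 * 4) by lra;
          rewrite sqrt_square by lra; reflexivity).
    apply sqrt_le_1_alt; nra.
Qed.

Theorem claim1 (n : nat) (gamma : R)
  (hn : (1 <= n)%nat)
  (hg0 : 0 < gamma) (hg1 : gamma <= 1 / 64)
  (hng : INR n + 2 <= (/ sqrt gamma) / 16) :
  let lam := sqrt 8 + gamma in
  let Delta := sqrt (lam ^ 2 - 8) in
  Delta <= 4 * sqrt gamma /\
  forall i : nat, (i <= n + 2)%nat ->
    (0 < 2 * Delta / (lam + Delta) /\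
     2 * Delta / (lam + Delta) < 2 * Delta / (lam - Delta) /\
     2 * Delta / (lam - Delta) < 1 / (2 * (INR n + 2))) /\
    (1 + INR i * Delta / (lam - Delta) <= ((lam + Delta) / (lam - Delta)) ^ i /\
     ((lam + Delta) / (lam - Delta)) ^ i <= 1 + 4 * INR i * Delta / (lam - Delta)) /\
    (1 - 4 * INR i * Delta / (lam + Delta) <= ((lam - Delta) / (lam + Delta)) ^ i /\
     ((lam - Delta) / (lam + Delta)) ^ i <= 1 - INR i * Delta / (lam + Delta)) /\
    (1 + 1 / (2 * (INR n + 1)) <=
       (1 - ((lam + Delta) / (lam - Delta)) ^ (n + 2)) /
       (1 - ((lam + Delta) / (lam - Delta)) ^ (n + 1)) /\
     (1 - ((lam + Delta) / (lam - Delta)) ^ (n + 2)) /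
       (1 - ((lam + Delta) / (lam - Delta)) ^ (n + 1)) <= 1 + 4 / (INR n + 1)).
Proof.
  intros lam Delta.
  assert (hDelta : 0 < Delta <= 4 * sqrt gamma) by (apply sqrt_excess_bounds; lra).
  destruct hDelta as [hD0 hD].
  assert (hr0 : 0 < sqrt gamma) by (apply sqrt_lt_R0; exact hg0).
  assert (hr : sqrt gamma <= 1 / 8)
    by (assert (sqrt gamma * sqrt gamma = gamma) by (apply sqrt_sqrt; lra); nra).
  assert (hs : 2.8 < sqrt 8)
    by (assert (sqrt 8 * sqrt 8 = 8) by (apply sqrt_sqrt; lra); pose proof (sqrt_pos 8); nra).
  assert (hgap : 2 <= lam - Delta) by (unfold lam; lra).
  assert (hnD : (INR n + 2) * Delta <= 1 / 4).
  { apply Rle_trans with (/ sqrt gamma / 16 * (4 * sqrt gamma)).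
    - apply Rmult_le_compat; [pose proof (pos_INR n); lra | lra | exact hng | exact hD].
    - right; field; lra. }
  assert (hn1 : 1 <= INR n) by (apply (le_INR 1); exact hn).
  split; [exact hD|].
  intros i hi.
  assert (hiD : INR i * Delta <= 1 / 4).
  { assert (hi' : INR i <= INR (n + 2)) by (apply le_INR, hi).
    rewrite plus_INR in hi'; simpl INR in hi'.
    nra. }
  split; [apply two_Delta_div_bounds; lra|].
  split; [apply pow_ratio_gt1_bounds; lra|].
  split; [apply pow_ratio_lt1_bounds; lra|].
  replace (n + 2)%nat with (S (n + 1)) by lia.
  replace (INR n + 1) with (INR (n + 1)) by (rewrite plus_INR, INR_1; reflexivity).
  apply ratio_pow_quotient_bounds; [exact hD0 | exact hgap | lia | rewrite plus_INR, INR_1; nra].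
Qed.
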